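(* Let $\Lambda$ be the double of a cellular decomposition of a compact oriented surface without boundary, with a discrete conformal structure $\rho$. Let $\mathcal{A},\mathcal{B}$ be two non-intersecting simple loops in $\Lambda$ such that exactly one edge of $\mathcal{A}$ is dual to an edge of $\mathcal{B}$. Then there exists a unique holomorphic $1$-form $\Phi_{\mathcal{AB}}$ on $\Lambda$ such that $\operatorname{Re}\int_{\mathcal{B}}\Phi_{\mathcal{AB}}=1$ and $\int_\gamma\Phi_{\mathcal{AB}}\in i\mathbb{R}$ for every loop $\gamma$ in $\Lambda$ none of whose edges is dual to an edge of $\mathcal{A}$.
   Context: $\Lambda=\Gamma\sqcup\Gamma^*$ with $\Gamma$ a cellular decomposition and $\Gamma^*$ its Poincaré dual (each edge $e$ crossed by one dual edge $e^*$, $e^{**}=-e$); $\rho:\Lambda_1\to(0,\infty)$ with $\rho(e)\rho(e^* )=1$. Hodge star on 1-forms: $\int_e*\alpha=-\rho(e^* )\int_{e^*}\alpha$. A 1-form $\alpha$ on $\Lambda$ is holomorphic if it is closed ($\oint_{\partial F}\alpha=0$ on every face $F$ of $\Gamma$ and $\Gamma^*$) and $*\alpha=-i\alpha$. *)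

From HB Require Import structures.
From mathcomp Require Import all_boot all_order all_algebra.
From mathcomp Require Import complex.

Set Implicit Arguments.
Unset Strict Implicit.
Unset Printing Implicit Defensive.
Import Order.TTheory GRing.Theory Num.Theory.
Local Open Scope ring_scope.

(* A cellular decomposition Gamma of a compact connected oriented surface
   without boundary is encoded by a combinatorial map (rotation system):
   a finite set T of darts (oriented edges of Gamma), a fixed-point-free
   involution [alpha] (reversal of orientation, e |-> -e) and a permutation
   [sigma] (next dart counterclockwise around the tail vertex).
   - vertices of Gamma         = sigma-orbits (tail of d = orbit of d);
   - faces of Gamma            = orbits of phi := sigma \o alpha;
   - the dual dart d* of a dart d crosses d from right to left: it goes
     from the face (phi-orbit) of d to the face of alpha d; thus the
     vertices of Gamma^* are the phi-orbits, its faces are the sigma-orbits,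
     and (d* )* = alpha d, i.e. e** = -e.
   A "kind" [k : bool] says whether we are in Gamma (false) or Gamma^* (true). *)

Section CombMap.
Variables (T : finType) (sigma alpha : T -> T).

Definition phi (d : T) : T := sigma (alpha d).

Definition cell_map : Prop :=
  [/\ injective sigma,
      (forall d, alpha (alpha d) = d),
      (forall d, alpha d != d) &
      (forall d d', connect (fun x y => (y == sigma x) || (y == alpha x)) d d')].

Definition vstep (k : bool) : T -> T := if k then phi else sigma.

Definition same_vertex (k : bool) (d d' : T) : bool := fconnect (vstep k) d d'.

Definition is_loop (k : bool) (s : seq T) : bool :=
  cycle (fun x y => same_vertex k (alpha x) y) s.

Definition simple_loop (k : bool) (s : seq T) : bool :=
  [&& s != [::], is_loop k s, uniq (s ++ map alpha s) &
      pairwise (fun x y => ~~ same_vertex k x y) s].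

Definition edge_dual (ka : bool) (a : T) (kb : bool) (b : T) : bool :=
  (ka != kb) && ((b == a) || (b == alpha a)).

Definition non_intersecting (ka : bool) (A : seq T) (kb : bool) (B : seq T) : Prop :=
  forall a b, a \in A -> b \in B -> ka = kb -> ~~ same_vertex ka a b.

Definition n_dual_edges (ka : bool) (A : seq T) (kb : bool) (B : seq T) : nat :=
  count (fun a => has (edge_dual ka a kb) B) A.

End CombMap.

Section Forms.
Variables (R : rcfType) (T : finType) (sigma alpha : T -> T).
Local Open Scope complex_scope.

(* a function on the oriented edges of Lambda = Gamma |_| Gamma^*:
   first component on darts d of Gamma, second on dual darts d* *)
Definition lform := ({ffun T -> R[i]} * {ffun T -> R[i]})%type.

Definition fval (w : lform) (k : bool) (d : T) : R[i] :=
  if k then w.2 d else w.1 d.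

Definition is_form (w : lform) : Prop :=
  forall d, w.1 (alpha d) = - w.1 d /\ w.2 (alpha d) = - w.2 d.

(* discrete conformal structure: rhoP on edges of Gamma, rhoD on edges of
   Gamma^* (d* is dual to d), positive, unoriented, rho(e) rho(e* ) = 1 *)
Definition conformal_structure (rhoP rhoD : T -> R) : Prop :=
  forall d, [/\ 0 < rhoP d, 0 < rhoD d, rhoP (alpha d) = rhoP d,
               rhoD (alpha d) = rhoD d & rhoP d * rhoD d = 1].

Definition closed_form (w : lform) : Prop :=
  forall d, \sum_(x <- orbit (phi sigma alpha) d) w.1 x = 0 /\
            \sum_(x <- orbit sigma d) w.2 x = 0.

(* Hodge star: int_e *w = - rho(e* ) int_{e*} w ; for e = d (primal)
   e* = d*, for e = d* (dual) e* = (d* )* = alpha d. *)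
Definition hodge (rhoP rhoD : T -> R) (w : lform) : lform :=
  ([ffun d => - (rhoD d)%:C * w.2 d],
   [ffun d => - (rhoP (alpha d))%:C * w.1 (alpha d)]).

Definition holomorphic (rhoP rhoD : T -> R) (w : lform) : Prop :=
  closed_form w /\
  hodge rhoP rhoD w = ([ffun d => - 'i * w.1 d], [ffun d => - 'i * w.2 d]).

Definition integral (w : lform) (k : bool) (s : seq T) : R[i] :=
  \sum_(d <- s) fval w k d.

End Forms.

From HB Require Import structures.
From mathcomp Require Import all_boot all_order all_algebra.
From mathcomp Require Import complex ring.
Set Implicit Arguments.
Unset Strict Implicit.
Unset Printing Implicit Defensive.
Import Order.TTheory GRing.Theory Num.Theory.
Local Open Scope ring_scope.

(* Let V be the restriction of Phi to the edges of the kind of B (opposite to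
   the kind of A); the relation *Phi = -i Phi recovers Phi on the other edges
   from V.  The conditions on Phi then say: Re V is closed, co-closed for the
   weights rho, has period 1 along B and vanishing periods along every loop
   that does not cross A; Im V is co-closed and rho * Im V is exact.
   Existence: the Poincare dual of A is closed and has the right periods since
   B crosses A exactly once; adding the differential of the solution of a
   Poisson equation makes it co-closed.  Uniqueness: a form as above with zero
   period along B is the differential of a potential on the surface cut along
   A, which stays connected because B joins the two sides of A; the jump of the
   potential is constant along A, hence zero, so the potential is harmonic and
   constant by the maximum principle.  The same principle kills Im V. *)

Section Walks.
Variables (T : finType) (f alpha : T -> T) (E : pred T).
Hypotheses (finj : injective f) (alphaK : involutive alpha)
  (E_alpha : forall x, E (alpha x) = E x).

(* Darts are oriented edges, vertices are f-orbits and alpha reverses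
   orientation, so the head of x is the vertex of alpha x. *)
Definition chained (x y : T) : bool := fconnect f (alpha x) y.

Definition graph_step (x y : T) : bool :=
  (y == f x) || (x == f y) || ((y == alpha x) && E x).

Fixpoint walk (u : T) (W : seq T) (v : T) : bool :=
  if W is x :: W' then fconnect f u x && walk (alpha x) W' v else fconnect f u v.

Lemma walk_start u u' W v : fconnect f u u' -> walk u' W v -> walk u W v.
Proof.
case: W => [|x W] /= uu'; first exact: connect_trans.
by case/andP=> u'x ->; rewrite (connect_trans uu' u'x).
Qed.

Lemma walk_end u W v v' : fconnect f v v' -> walk u W v -> walk u W v'.
Proof.
elim: W u => [|x W IH] u /= vv'; first by move/connect_trans; apply.
by case/andP=> -> /IH ->.
Qed.

Lemma walk_cat u W1 v W2 w : walk u W1 v -> walk v W2 w -> walk u (W1 ++ W2) w.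
Proof.
elim: W1 u => [|x W IH] u /=; first exact: walk_start.
by case/andP=> -> W_v /(IH _ W_v) ->.
Qed.

Lemma walk_rev u W v : walk u W v -> walk v (rev (map alpha W)) u.
Proof.
elim: W u => [|x W IH] u /=; first by rewrite fconnect_sym.
case/andP=> ux /IH W_v; rewrite rev_cons -cats1; apply: walk_cat W_v _.
by rewrite /= connect0 alphaK fconnect_sym.
Qed.

Lemma walk_path x W v y : walk (alpha x) W v -> fconnect f v y -> path chained x (rcons W y).
Proof.
rewrite /chained; elim: W x => [|z W IH] x /=.
  by rewrite andbT => /connect_trans; apply.
by case/andP=> -> /IH W_v /W_v ->.
Qed.

Lemma walk_cycle u W : walk u W u -> cycle chained W.
Proof. by case: W => [|x W] //= /andP[ux /walk_path]; apply. Qed.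

Lemma walk_of_connect u v : connect graph_step u v -> exists W, walk u W v && all E W.
Proof.
case/connectP=> s + ->; elim: s u => [|y s IH] u /=; first by exists [::]; rewrite /= connect0.
case/andP=> st /IH [W /andP[W_v EW]].
case/orP: st => [u_y|/andP[/eqP y_au Eu]]; last first.
  by exists (u :: W); rewrite /= connect0 -y_au W_v Eu EW.
exists W; rewrite EW andbT; apply: walk_start W_v.
by case/orP: u_y => /eqP ->; rewrite ?fconnect1 // fconnect_sym // fconnect1.
Qed.

Variables (V : zmodType) (omega : T -> V).
Hypotheses (omegaN : forall x, omega (alpha x) = - omega x)
  (omega_periods : forall g, cycle chained g -> all E g -> \sum_(x <- g) omega x = 0).

Lemma walk_sum_indep u v W1 W2 : walk u W1 v -> walk u W2 v -> all E W1 -> all E W2 ->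
  \sum_(x <- W1) omega x = \sum_(x <- W2) omega x.
Proof.
move=> W1_v W2_v EW1 EW2; have := omega_periods (walk_cycle (walk_cat W1_v (walk_rev W2_v))).
rewrite all_cat EW1 all_rev all_map.
have -> : all (preim alpha E) W2 by apply/allP=> x xW; rewrite /= E_alpha (allP EW2).
rewrite big_cat big_rev big_map /=.
under [X in _ + X]eq_bigr do rewrite omegaN.
by rewrite sumrN => /(_ isT) /eqP; rewrite subr_eq0 => /eqP.
Qed.

Hypothesis connected : forall x y, connect graph_step x y.

Lemma exact_of_zero_periods : exists F : T -> V, (forall x, F (f x) = F x) /\
  forall x, E x -> omega x = F (alpha x) - F x.
Proof.
case: (pickP (@predT T)) => [r _|T0]; last by exists (fun _ => 0); split=> x; have := T0 x.
pose W x := xchoose (walk_of_connect (connected r x)).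
have W_x x : walk r (W x) x by have /andP[] := xchooseP (walk_of_connect (connected r x)).
have EW x : all E (W x) by have /andP[] := xchooseP (walk_of_connect (connected r x)).
exists (fun x => \sum_(y <- W x) omega y); split=> [x|x Ex].
  by apply: walk_sum_indep (W_x _) (walk_end (fconnect1 f x) (W_x x)) _ _.
have W'_ax : walk r (W x ++ [:: x]) (alpha x) by apply: walk_cat (W_x x) _; rewrite /= !connect0.
rewrite (walk_sum_indep (W_x _) W'_ax) ?all_cat ?EW /= ?Ex //.
by rewrite big_cat big_seq1 /= addrC addrK.
Qed.

End Walks.

Section Harmonic.
Variables (R : realFieldType) (T : finType) (f alpha : T -> T).
Hypotheses (finj : injective f) (alphaK : involutive alpha)
  (connected : forall x y, connect (graph_step f alpha predT) x y).

Lemma fconnect_const (h : T -> R) : (forall x, h (f x) = h x) ->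
  forall x y, fconnect f x y -> h y = h x.
Proof.
move=> hf x y /(fconnect_invariant (k := h)) -> //.
by move=> z; rewrite /= hf eqxx.
Qed.

Lemma connect_invariant (e : rel T) (P : pred T) :
  (forall x y, e x y -> P x -> P y) -> forall x y, connect e x y -> P x -> P y.
Proof.
move=> eP x _ /connectP[p + ->]; elim: p x => //= y p IH x /andP[exy ep] Px.
exact: IH ep (eP _ _ exy Px).
Qed.

(* Maximum principle: at a vertex where h is maximal, all the nonnegative terms
   w y * (h y - h (alpha y)) sum to zero, so the maximum propagates. *)
Lemma harmonic_const (w : T -> R) (h : T -> R) : (forall x, 0 < w x) ->
  (forall x, h (f x) = h x) ->
  (forall d, \sum_(y | fconnect f d y) w y * (h (alpha y) - h y) = 0) ->
  forall x y, h x = h y.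
Proof.
move=> w_gt0 hf h_harm x y.
have [m _ m_max] := @arg_maxP _ _ T x predT h isT.
suff max_everywhere z : h z == h m.
  by rewrite (eqP (max_everywhere x)) (eqP (max_everywhere y)).
apply: (connect_invariant (P := [pred z | h z == h m])) (connected m z) _ => /= [a b|//].
case/orP=> [/orP[]/eqP->|/andP[/eqP-> _]] /eqP ha; first by rewrite hf ha.
  by rewrite -ha hf.
have flux0 : \sum_(t | fconnect f a t) w t * (h t - h (alpha t)) = 0.
  apply/eqP; rewrite -oppr_eq0 -sumrN; apply/eqP; rewrite -[RHS](h_harm a).
  by apply: eq_bigr => t _; rewrite -mulrN opprB.
have terms_ge0 t : fconnect f a t -> 0 <= w t * (h t - h (alpha t)).
  move=> a_t; apply: mulr_ge0; first exact: ltW.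
  by rewrite subr_ge0 (fconnect_const hf a_t) ha; apply: m_max.
have /eqP := psumr_eq0P terms_ge0 flux0 (connect0 _ a).
by rewrite mulf_eq0 gt_eqF //= subr_eq0 => /eqP <-; rewrite ha.
Qed.

Lemma coclosed_exact_form_eq0 (w b : T -> R) :
  (forall x, 0 < w x) -> (forall x, w (alpha x) = w x) ->
  (forall x, b (alpha x) = - b x) ->
  (forall d, \sum_(x | fconnect f d x) b x = 0) ->
  (forall g, cycle (chained f alpha) g -> \sum_(x <- g) w x * b x = 0) ->
  forall x, b x = 0.
Proof.
move=> w_gt0 w_alpha bN b_coclosed b_exact.
have wbN x : w (alpha x) * b (alpha x) = - (w x * b x) by rewrite w_alpha bN mulrN.
have [F [Ff dF]] := exact_of_zero_periods (E := predT) finj alphaK (fun _ => erefl) wbN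
  (fun g g_cycle _ => b_exact g g_cycle) connected.
have F_harm d : \sum_(y | fconnect f d y) (w y)^-1 * (F (alpha y) - F y) = 0.
  by rewrite -[RHS](b_coclosed d); apply: eq_bigr => y _; rewrite -dF // mulKf ?gt_eqF.
have winv_gt0 x : 0 < (w x)^-1 by rewrite invr_gt0.
have F_const := harmonic_const winv_gt0 Ff F_harm.
move=> x; apply: (mulfI (lt0r_neq0 (w_gt0 x))).
by rewrite mulr0 dF // (F_const (alpha x) x) subrr.
Qed.

End Harmonic.

Lemma sum_mul_delta (R : pzSemiRingType) (T : finType) (H : T -> R) a :
  \sum_z H z * (a == z)%:R = H a.
Proof.
rewrite (bigD1 a) //= eqxx mulr1 big1 ?addr0 // => z /negbTE.
by rewrite eq_sym => ->; rewrite mulr0.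
Qed.

Lemma mx_surj_of_inj (R : fieldType) n (M : 'M[R]_n) :
  (forall u : 'rV_n, u *m M = 0 -> u = 0) -> forall v : 'rV_n, exists u, u *m M = v.
Proof.
move=> M_inj v; have M_unit : M \in unitmx.
  rewrite -row_free_unit -kermx_eq0; apply/eqP/row_matrixP => i.
  by rewrite row0; apply: M_inj; rewrite -row_mul mulmx_ker row0.
by exists (v *m invmx M); rewrite mulmxKV.
Qed.

Section Poisson.
Variables (R : realFieldType) (T : finType) (f alpha : T -> T) (w : T -> R).
Hypotheses (finj : injective f) (alphaK : involutive alpha)
  (w_gt0 : forall x, 0 < w x) (w_alpha : forall x, w (alpha x) = w x)
  (connected : forall x y, connect (graph_step f alpha predT) x y).

Let f_sym := fconnect_sym finj.
Let rt := froot f.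
Let isroot x := rt x == x.

Lemma rt_root x : isroot (rt x). Proof. by rewrite /isroot /rt root_root. Qed.

Lemma fconnect_rt d y : fconnect f d y = (rt y == rt d).
Proof. by rewrite /rt eq_sym root_connect. Qed.

Lemma rt_f x : rt (f x) = rt x.
Proof. by rewrite /rt; apply/esym/(fingraph.rootP f_sym); apply: fconnect1. Qed.

Lemma sum_by_orbits (F : T -> R) :
  \sum_(x | isroot x) \sum_(y | rt y == x) F y = \sum_y F y.
Proof. by rewrite [RHS](partition_big rt isroot) // => y _; apply: rt_root. Qed.

Lemma sum_alpha (F : T -> R) : \sum_y F (alpha y) = \sum_y F y.
Proof. by rewrite (reindex_inj (inv_inj alphaK)); apply: eq_bigr => y _; rewrite alphaK. Qed.

Lemma sum_roots_laplacian (H : T -> R) :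
  \sum_(x | isroot x) \sum_(y | rt y == x) w y * (H (rt (alpha y)) - H x) = 0.
Proof.
transitivity (\sum_(x | isroot x) \sum_(y | rt y == x) w y * (H (rt (alpha y)) - H (rt y))).
  by apply: eq_bigr => x _; apply: eq_bigr => y /eqP ->.
rewrite sum_by_orbits; under eq_bigr do rewrite mulrBr.
rewrite sumrB -(sum_alpha (fun y => w y * H (rt y))) /=.
by under [X in _ - X]eq_bigr do rewrite w_alpha; rewrite subrr.
Qed.

(* At an orbit representative this is the Laplacian of H plus the total of H
   over all representatives, which removes the constants from the kernel;
   elsewhere it is the identity. *)
Definition grounded_laplacian (H : T -> R) (x : T) : R :=
  if isroot x then \sum_(y | rt y == x) w y * (H (rt (alpha y)) - H x) + \sum_(z | isroot z) H z
  else H x.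

Lemma sum_roots_grounded_laplacian H :
  \sum_(x | isroot x) grounded_laplacian H x = (\sum_(z | isroot z) H z) *+ #|isroot|.
Proof.
rewrite (eq_bigr (fun x => \sum_(y | rt y == x) w y * (H (rt (alpha y)) - H x) +
  \sum_(z | isroot z) H z)) => [|x x_root]; last by rewrite /grounded_laplacian x_root.
by rewrite big_split /= sum_roots_laplacian add0r sumr_const.
Qed.

Lemma grounded_total_eq0 H : \sum_(x | isroot x) grounded_laplacian H x = 0 ->
  \sum_(z | isroot z) H z = 0.
Proof.
rewrite sum_roots_grounded_laplacian => /eqP; rewrite mulrn_eq0 => /orP[/eqP no_roots|/eqP //].
by rewrite big_pred0 // => z; have := card0_eq no_roots z; rewrite unfold_in.
Qed.

Lemma grounded_laplacian_inj H : (forall x, grounded_laplacian H x = 0) -> forall x, H x = 0.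
Proof.
move=> LH0; have S0 : \sum_(z | isroot z) H z = 0.
  by apply: grounded_total_eq0; apply: big1 => x _.
pose h x := H (rt x).
have hf x : h (f x) = h x by rewrite /h rt_f.
have h_harm d : \sum_(y | fconnect f d y) w y * (h (alpha y) - h y) = 0.
  rewrite -[RHS](LH0 (rt d)) /grounded_laplacian rt_root S0 addr0.
  apply: eq_big => y; first exact: fconnect_rt.
  by rewrite fconnect_rt => /eqP rt_y; rewrite /h rt_y.
have h_const := harmonic_const connected w_gt0 hf h_harm.
move=> x; case x_root: (isroot x); last by have := LH0 x; rewrite /grounded_laplacian x_root.
have : \sum_(z | isroot z) H z = h x *+ #|isroot|.
  by rewrite -sumr_const; apply: eq_bigr => z /eqP z_root; rewrite (h_const x z) /h z_root.
rewrite S0 /h (eqP x_root) => /eqP; rewrite eq_sym mulrn_eq0 => /orP[/eqP no_roots|/eqP //].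
by have := card0_eq no_roots x; rewrite unfold_in /= -/(isroot x) x_root inE.
Qed.

Definition grounded_laplacian_coef (z x : T) : R :=
  if isroot x then
    \sum_(y | rt y == x) w y * ((rt (alpha y) == z)%:R - (x == z)%:R) + (isroot z)%:R
  else (x == z)%:R.

Lemma grounded_laplacian_coefE H x :
  \sum_z H z * grounded_laplacian_coef z x = grounded_laplacian H x.
Proof.
rewrite /grounded_laplacian_coef /grounded_laplacian; case: ifP => _; last by rewrite sum_mul_delta.
under eq_bigr do rewrite mulrDr; rewrite big_split /=; congr (_ + _).
  under eq_bigr do rewrite mulr_sumr; rewrite exchange_big /=.
  apply: eq_bigr => y _; under eq_bigr do rewrite mulrCA mulrBr.
  by rewrite -mulr_sumr sumrB !sum_mul_delta.
rewrite [RHS]big_mkcond /=; apply: eq_bigr => z _.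
by case: (isroot z); rewrite ?mulr1 ?mulr0.
Qed.

Definition grounded_laplacian_mx : 'M[R]_#|T| :=
  \matrix_(i, j) grounded_laplacian_coef (enum_val i) (enum_val j).

Lemma grounded_laplacian_mxE (u : 'rV[R]_#|T|) x :
  (u *m grounded_laplacian_mx) 0 (enum_rank x) = grounded_laplacian (fun z => u 0 (enum_rank z)) x.
Proof.
rewrite -grounded_laplacian_coefE mxE (big_enum_val (A := T)) /=; apply: eq_bigr => i _.
by rewrite mxE enum_valK enum_rankK.
Qed.

Lemma poisson_solvable (G : T -> R) : (forall x, G (alpha x) = - G x) ->
  exists h : T -> R, (forall x, h (f x) = h x) /\
    forall d, \sum_(y | fconnect f d y) (w y * (h (alpha y) - h y) + G y) = 0.
Proof.
move=> GN; have sumG0 : \sum_y G y = 0.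
  have sumG_opp : \sum_y G y = - \sum_y G y.
    by rewrite -{1}(sum_alpha G) -sumrN; apply: eq_bigr => y _; rewrite GN.
  by move/eqP: sumG_opp; rewrite -addr_eq0 -mulr2n mulrn_eq0 => /orP[//|/eqP].
pose g x := if isroot x then - \sum_(y | rt y == x) G y else 0.
have [u Lu] : exists u : 'rV_#|T|, u *m grounded_laplacian_mx = \row_i g (enum_val i).
  apply: mx_surj_of_inj => u Lu0; apply/rowP => i; rewrite mxE -(enum_valK i).
  apply: (grounded_laplacian_inj (H := fun z => u 0 (enum_rank z))) => x.
  by rewrite -grounded_laplacian_mxE Lu0 !mxE.
pose H z := u 0 (enum_rank z).
have LH x : grounded_laplacian H x = g x by rewrite -grounded_laplacian_mxE Lu mxE enum_rankK.
have S0 : \sum_(z | isroot z) H z = 0.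
  apply: grounded_total_eq0; rewrite (eq_bigr _ (fun x _ => LH x)).
  rewrite (eq_bigr (fun x => - \sum_(y | rt y == x) G y)) => [|x x_root]; last by rewrite /g x_root.
  by rewrite sumrN sum_by_orbits sumG0 oppr0.
exists (fun x => H (rt x)); split=> [x|d]; first by rewrite rt_f.
have := LH (rt d); rewrite /grounded_laplacian /g rt_root S0 addr0 => /eqP.
rewrite -subr_eq0 opprK -big_split /= => /eqP flux0; rewrite -[RHS]flux0.
apply: eq_big => y; first exact: fconnect_rt.
by rewrite fconnect_rt => /eqP ->.
Qed.

End Poisson.

Lemma count_eq1_inj (T : eqType) (P : pred T) (s : seq T) x y : uniq s ->
  count P s = 1%N -> x \in s -> P x -> y \in s -> P y -> x = y.
Proof.
move=> s_uniq countP1 xs Px ys Py; apply/eqP/negPn/negP => x_neq_y.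
move: countP1; rewrite (permP (perm_to_rem xs)) /= Px add1n => /eqP.
rewrite eqSS -leqn0 leqNgt -has_count => /hasPn /(_ y).
by rewrite (mem_rem_uniq _ s_uniq) inE eq_sym x_neq_y ys Py => /(_ isT).
Qed.

Lemma mem_alpha_uniq (T : eqType) (alpha : T -> T) (s : seq T) x :
  uniq (s ++ map alpha s) -> x \in s -> alpha x \notin s.
Proof.
rewrite cat_uniq => /and3P[_ /hasP s_alpha _] xs; apply/negP => axs.
by apply: s_alpha; exists (alpha x) => //; apply: map_f.
Qed.

Lemma cycle_rel_in (T : eqType) (e : rel T) (r : T -> T -> Prop) (s : seq T) :
  (forall x y, r x y -> r y x) -> (forall x y z, r x y -> r y z -> r x z) ->
  cycle e s -> {in s &, forall x y, e x y -> r x y} -> {in s &, forall x y, r x y}.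
Proof.
move=> r_sym r_trans; case: s => [//|x0 s] s_cycle r_e.
have along x s' : x \in x0 :: s -> {subset s' <= x0 :: s} -> r x0 x -> path e x s' ->
    forall t, t \in s' -> r x0 t.
  elim: s' x => [//|y s' IH] x xs s'_sub r0x /= /andP[exy s'_path] t.
  have ys : y \in x0 :: s by apply: s'_sub; rewrite mem_head.
  have r0y := r_trans _ _ _ r0x (r_e x y xs ys exy).
  rewrite inE => /orP[/eqP -> //|ts']; apply: IH s'_path t ts' => // u us'.
  by apply: s'_sub; rewrite inE us' orbT.
have x0s : x0 \in x0 :: s := mem_head x0 s.
have r_x0_next : r x0 (next (x0 :: s) x0).
  by apply: r_e; rewrite ?mem_next //; apply: next_cycle s_cycle x0s.
have r_x0_x0 : r x0 x0 by apply: r_trans r_x0_next (r_sym _ _ r_x0_next).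
have r_x0 t : t \in x0 :: s -> r x0 t.
  rewrite inE => /orP[/eqP -> //|ts]; apply: (along x0 s) => //.
    by move=> u us; rewrite inE us orbT.
  by move: s_cycle; rewrite /= rcons_path => /andP[].
move=> x y xs ys; exact: r_trans (r_sym _ _ (r_x0 x xs)) (r_x0 y ys).
Qed.

Section CutAlongLoop.
Local Open Scope nat_scope.
Variables (T : finType) (p q alpha : T -> T).
Hypotheses (p_inj : injective p) (alphaK : involutive alpha) (q_def : forall x, q x = p (alpha x)).
Variables (A B : seq T).
Hypotheses (A_cycle : cycle (chained p alpha) A) (A_uniq : uniq (A ++ map alpha A))
  (A_pairwise : pairwise (fun x y => ~~ fconnect p x y) A).

Let p_sym := fconnect_sym p_inj.

Lemma p_def x : p x = q (alpha x). Proof. by rewrite q_def alphaK. Qed.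

Lemma q_inj : injective q.
Proof. by move=> x y; rewrite !q_def => /p_inj /(inv_inj alphaK). Qed.

Lemma A_uniq1 : uniq A. Proof. by move: A_uniq; rewrite cat_uniq => /and3P[]. Qed.

Lemma A_same_tail a a' : a \in A -> a' \in A -> fconnect p a a' -> a = a'.
Proof.
elim: A A_pairwise => // x s IH /= /andP[/allP x_s s_pairwise].
rewrite !inE => /orP[/eqP->|aA] /orP[/eqP->|a'A] // aa'.
- by have := x_s _ a'A; rewrite aa'.
- by have := x_s _ aA; rewrite p_sym aa'.
- exact: IH.
Qed.

Lemma A_same_head a a' : a \in A -> a' \in A -> fconnect p (alpha a) (alpha a') -> a = a'.
Proof.
move=> aA a'A aa'.
have : next A a = next A a'.
  apply: A_same_tail; rewrite ?mem_next //.
  apply: (connect_trans (y := alpha a)); first by rewrite p_sym; exact: next_cycle A_cycle aA.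
  exact: connect_trans aa' (next_cycle A_cycle a'A).
by move/(congr1 (prev A)); rewrite !prev_next //; exact: A_uniq1.
Qed.

Definition on_A x := (x \in A) || (alpha x \in A).
Definition off_A x := ~~ on_A x.

Lemma on_A_alpha x : on_A (alpha x) = on_A x.
Proof. by rewrite /on_A alphaK orbC. Qed.

Lemma off_A_alpha x : off_A (alpha x) = off_A x.
Proof. by rewrite /off_A on_A_alpha. Qed.

Lemma on_A_around y z t : y \in A -> z \in A -> chained p alpha y z ->
  fconnect p z t -> on_A t -> (t == z) || (t == alpha y).
Proof.
move=> yA zA yz zt /orP[tA|atA]; first by rewrite (A_same_tail zA tA zt) eqxx.
have -> // : alpha y = t; last by rewrite eqxx orbT.
apply: (can_inj alphaK); rewrite alphaK; apply: A_same_head => //.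
by rewrite alphaK; apply: connect_trans yz zt.
Qed.

Lemma on_A_vertex z : on_A z ->
  exists y z', [/\ y \in A, z' \in A, chained p alpha y z' & fconnect p z' z].
Proof.
case/orP=> [zA|azA].
  by exists (prev A z), z; rewrite mem_prev connect0 (prev_cycle A_cycle zA).
exists (alpha z), (next A (alpha z)); rewrite mem_next (next_cycle A_cycle azA) azA.
by split=> //; rewrite p_sym; have := next_cycle A_cycle azA; rewrite /chained alphaK.
Qed.

Local Notation cut_step := (graph_step q alpha off_A).

Lemma cut_connect_sym : connect_sym cut_step.
Proof.
apply: sym_connect_sym => x y; rewrite /graph_step.
by apply/idP/idP => /orP[/orP[]->|/andP[/eqP-> off]];
  rewrite ?orbT // alphaK eqxx off_A_alpha off ?orbT.
Qed.

Lemma cut_connect_q x : connect cut_step x (q x).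
Proof. by apply: connect1; rewrite /graph_step eqxx. Qed.

Lemma cut_connect_alpha x : off_A x -> connect cut_step x (alpha x).
Proof. by move=> off; apply: connect1; rewrite /graph_step eqxx off !orbT. Qed.

Lemma cut_connect_fq x y : fconnect q x y -> connect cut_step x y.
Proof.
case/connectP=> s + ->; elim: s x => [|z s IH] x /=; first by rewrite connect0.
by case/andP=> /eqP <- /IH; apply: connect_trans (cut_connect_q x).
Qed.

Lemma cut_connect_p x : off_A x -> connect cut_step x (p x).
Proof. by move=> off; rewrite p_def; apply: connect_trans (cut_connect_alpha off) (cut_connect_q _). Qed.

Lemma cut_connect_iter x k : 0 < k -> (forall j, 0 < j -> j < k -> off_A (iter j p x)) ->
  connect cut_step (p x) (iter k p x).
Proof.
elim: k => // k IH _ off_iter; case: k IH off_iter => [|k] IH off_iter; first exact: connect0.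
apply: connect_trans (IH isT _) _; first by move=> j j_gt0 jk; apply: off_iter => //; exact: ltnW.
by rewrite iterS; apply: cut_connect_p; apply: (off_iter k.+1).
Qed.

Lemma cut_connect_orbit x z : fconnect p x z -> x != z ->
  (forall t, fconnect p x t -> t != x -> t != z -> off_A t) -> connect cut_step (p x) z.
Proof.
move=> xz x_neq_z off_between; rewrite -(iter_findex xz).
have k_max := findex_max xz; set k := findex p x z in k_max *.
apply: cut_connect_iter => [|j j_gt0 jk]; first by rewrite lt0n findex_eq0.
have j_max := ltn_trans jk k_max.
apply: off_between; first exact: fconnect_iter.
  apply/eqP => /(congr1 (findex p x)); rewrite findex_iter // findex0.
  by move=> j0; rewrite j0 in j_gt0.
apply/eqP => /(congr1 (findex p x)); rewrite findex_iter // -/k.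
by move=> jk_eq; rewrite jk_eq ltnn in jk.
Qed.

Lemma cut_connect_consecutive y z : y \in A -> z \in A -> chained p alpha y z ->
  connect cut_step y z /\ connect cut_step (alpha y) (alpha z).
Proof.
move=> yA zA yz.
have ay_neq_z : alpha y != z by apply: contraTneq zA => <-; exact: mem_alpha_uniq.
have off t : fconnect p z t -> t != z -> t != alpha y -> off_A t.
  move=> zt t_neq_z t_neq_ay; apply/negP => on_t.
  by have := on_A_around yA zA yz zt on_t; rewrite (negbTE t_neq_z) (negbTE t_neq_ay).
split.
  apply: connect_trans (cut_connect_q y) _; rewrite q_def.
  apply: cut_connect_orbit => // t ayt t_neq_ay t_neq_z; apply: off => //.
  by apply: connect_trans ayt; rewrite p_sym.
rewrite cut_connect_sym; apply: connect_trans (cut_connect_q (alpha z)) _.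
rewrite q_def alphaK; have zay : fconnect p z (alpha y) by rewrite p_sym.
by apply: (cut_connect_orbit zay) => [|t zt t_neq_z t_neq_ay]; rewrite 1?eq_sym ?off.
Qed.

Lemma cut_connect_A a a' : a \in A -> a' \in A ->
  connect cut_step a a' /\ connect cut_step (alpha a) (alpha a').
Proof.
move: a a'; apply: (cycle_rel_in
  (r := fun x y => connect cut_step x y /\ connect cut_step (alpha x) (alpha y)) _ _ A_cycle).
- by move=> x y [xy axy]; rewrite cut_connect_sym [connect _ (alpha y) _]cut_connect_sym.
- by move=> x y z [xy axy] [yz ayz]; split; apply: connect_trans; eassumption.
- exact: cut_connect_consecutive.
Qed.

Lemma A_const (V : Type) (F : T -> V) :
  (forall y z, y \in A -> z \in A -> chained p alpha y z -> F z = F y) ->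
  {in A &, forall a a', F a = F a'}.
Proof.
move=> F_step; apply: (cycle_rel_in (r := fun x y => F x = F y) _ _ A_cycle).
- by move=> x y /esym.
- by move=> x y z /= ->.
move=> y z yA zA yz.
exact/esym/F_step.
Qed.

Hypotheses (B_cycle : cycle (chained q alpha) B) (B_uniq : uniq (B ++ map alpha B))
  (AB_once : count (fun a => has (fun b => (b == a) || (b == alpha a)) B) A = 1)
  (p_connected : forall x y, connect (graph_step p alpha predT) x y).

Lemma B_uniq1 : uniq B. Proof. by move: B_uniq; rewrite cat_uniq => /and3P[]. Qed.

Lemma B_crosses_A_once : exists a0 b0, [/\ a0 \in A, b0 \in B,
  (b0 == a0) || (b0 == alpha a0) & forall b, b \in B -> on_A b -> b = b0].
Proof.
pose P a := has (fun b => (b == a) || (b == alpha a)) B.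
have /hasP [a0 a0A /hasP [b0 b0B b0a0]] : has P A by rewrite has_count AB_once.
exists a0, b0; split=> // b bB on_b.
have [a aA ba] : exists2 a, a \in A & (b == a) || (b == alpha a).
  by case/orP: on_b => [bA|abA]; [exists b | exists (alpha b)]; rewrite ?alphaK ?eqxx ?orbT.
have a_a0 : a = a0.
  apply: (count_eq1_inj (P := P) A_uniq1 AB_once aA _ a0A); last by apply/hasP; exists b0.
  by apply/hasP; exists b.
rewrite {a aA}a_a0 in ba.
case/orP: ba => /eqP b_def; case/orP: b0a0 => /eqP b0_def; rewrite b_def b0_def //.
  by have := mem_alpha_uniq B_uniq bB; rewrite b_def -b0_def b0B.
by have := mem_alpha_uniq B_uniq b0B; rewrite b0_def -b_def bB.
Qed.

Lemma cut_connect_path x s y : path (chained q alpha) x (rcons s y) -> all off_A s ->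
  connect cut_step (alpha x) y.
Proof.
elim: s x => [|t s IH] x /=; first by rewrite andbT => xy _; apply: cut_connect_fq.
case/andP=> xt ts /andP[off_t off_s]; apply: connect_trans (cut_connect_fq xt) _.
exact: connect_trans (cut_connect_alpha off_t) (IH _ ts off_s).
Qed.

(* The two sides of A are joined by B, which crosses A exactly once. *)
Lemma cut_connected x y : connect cut_step x y.
Proof.
have [a0 [b0 [a0A b0B b0a0 B_on_A]]] := B_crosses_A_once.
have b0_sides : connect cut_step (alpha b0) b0.
  have [i s rot_B] := rot_to b0B.
  have := B_cycle; rewrite -(rot_cycle i) rot_B /= => /cut_connect_path; apply.
  apply/allP => t ts; apply/negP => on_t.
  have tB : t \in B by rewrite -(mem_rot i) rot_B inE ts orbT.
  by move: B_uniq1; rewrite -(rot_uniq i) rot_B /= -(B_on_A t tB on_t) ts.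
have a0_sides : connect cut_step a0 (alpha a0).
  by case/orP: b0a0 => /eqP b0E; move: b0_sides; rewrite b0E ?alphaK // cut_connect_sym.
have a0_on t : on_A t -> connect cut_step a0 t.
  case/orP=> [tA|atA]; first by case: (cut_connect_A a0A tA).
  by apply: connect_trans a0_sides _; case: (cut_connect_A a0A atA); rewrite alphaK.
have sides t : connect cut_step t (alpha t).
  case off_t: (off_A t); first exact: cut_connect_alpha.
  have on_t : on_A t by apply/negbFE.
  apply: (connect_trans (y := a0)); first by rewrite cut_connect_sym; apply: a0_on.
  by apply: a0_on; rewrite on_A_alpha.
suff a0_all z : connect cut_step a0 z by apply: connect_trans (a0_all y); rewrite cut_connect_sym.
apply: (connect_sub _ (p_connected a0 z)) => u v.
have p_step t : connect cut_step t (p t).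
  by rewrite p_def; apply: connect_trans (sides t) (cut_connect_q _).
by case/orP=> [/orP[]/eqP->|/andP[/eqP-> _]]; rewrite ?[connect _ (p v) v]cut_connect_sym.
Qed.

Lemma q_connected x y : connect (graph_step q alpha predT) x y.
Proof.
apply: (connect_sub _ (cut_connected x y)) => u v uv; apply: connect1.
by move: uv; rewrite /graph_step => /orP[->//|/andP[-> _]]; rewrite !orbT.
Qed.

Local Open Scope ring_scope.
Variables (R : realFieldType) (w : T -> R).
Hypotheses (w_gt0 : forall x, 0 < w x) (w_alpha : forall x, w (alpha x) = w x).

Lemma sum_vertex_on_A y z (F : T -> R) : y \in A -> z \in A -> chained p alpha y z ->
  (forall t, off_A t -> F t = 0) -> \sum_(t | fconnect p z t) F t = F z + F (alpha y).
Proof.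
move=> yA zA yz F_off.
have ay_neq_z : alpha y != z by apply: contraTneq zA => <-; exact: mem_alpha_uniq.
rewrite (bigD1 z) ?connect0 //= (bigD1 (alpha y)) /=; last by rewrite ay_neq_z andbT p_sym.
rewrite big1 ?addr0 // => t /andP[/andP[zt t_neq_z] t_neq_ay]; apply: F_off; apply/negP => on_t.
by have := on_A_around yA zA yz zt on_t; rewrite (negbTE t_neq_z) (negbTE t_neq_ay).
Qed.

Definition A_form x : R := if x \in A then 1 else if alpha x \in A then -1 else 0.

Lemma A_formN x : A_form (alpha x) = - A_form x.
Proof.
rewrite /A_form alphaK; case: (boolP (x \in A)) => xA.
  by rewrite (negbTE (mem_alpha_uniq A_uniq xA)).
by case: ifP; rewrite ?opprK ?oppr0.
Qed.

Lemma A_form_off x : off_A x -> A_form x = 0.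
Proof. by rewrite /off_A /on_A negb_or /A_form => /andP[/negbTE-> /negbTE->]. Qed.

Lemma A_form_closed d : \sum_(t | fconnect p d t) A_form t = 0.
Proof.
case: (pickP (fun t => fconnect p d t && on_A t)) => [t /andP[dt on_t]|off_d]; last first.
  by apply: big1 => t dt; apply: A_form_off; have := off_d t; rewrite dt /= /off_A => ->.
have [y [z [yA zA yz zt]]] := on_A_vertex on_t.
have zd : fconnect p z d by apply: connect_trans zt _; rewrite p_sym.
rewrite -(eq_bigl _ _ (same_connect p_sym zd)) (sum_vertex_on_A yA zA yz A_form_off).
by rewrite /A_form zA (negbTE (mem_alpha_uniq A_uniq yA)) alphaK yA subrr.
Qed.

Lemma differential_closed (h : T -> R) d : (forall x, h (q x) = h x) ->
  \sum_(t | fconnect p d t) (h (alpha t) - h t) = 0.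
Proof.
move=> hq; rewrite sumrB; apply/eqP; rewrite subr_eq0; apply/eqP.
rewrite [RHS](reindex_inj p_inj) /=; apply: eq_big => [t|t _]; first by rewrite -same_fconnect1_r.
by rewrite p_def hq.
Qed.

Lemma differential_periods (h : T -> R) g : (forall x, h (q x) = h x) ->
  cycle (chained q alpha) g -> \sum_(x <- g) (h (alpha x) - h x) = 0.
Proof.
move=> hq; case: g => [|x0 s] /=; first by rewrite big_nil.
suff sum_heads x s' : path (chained q alpha) x s' ->
    \sum_(y <- belast x s') h (alpha y) = \sum_(z <- s') h z.
  move/sum_heads; rewrite belast_rcons sumrB => ->.
  by rewrite (perm_big (x0 :: s)) ?subrr // perm_rcons.
elim: s' x => [|y s' IH] x /=; first by rewrite !big_nil.
by case/andP=> xy /IH; rewrite !big_cons (fconnect_const hq xy) => ->.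
Qed.

Lemma sum_B_off_A (F : T -> R) : (forall t, off_A t -> F t = 0) ->
  exists a0 b0, [/\ a0 \in A, (b0 == a0) || (b0 == alpha a0) & \sum_(x <- B) F x = F b0].
Proof.
move=> F_off; have [a0 [b0 [a0A b0B b0a0 B_on_A]]] := B_crosses_A_once.
exists a0, b0; split=> //; rewrite (bigD1_seq b0) //= ?B_uniq1 // big1_seq ?addr0 //.
move=> t /andP[t_neq_b0 tB]; apply: F_off; apply/negP => on_t.
by rewrite (B_on_A t tB on_t) eqxx in t_neq_b0.
Qed.

(* The conditions satisfied by Re V, with p-orbits the faces and q-orbits the
   vertices of the graph of V. *)
Definition cut_harmonic (b : T -> R) : Prop :=
  [/\ forall x, b (alpha x) = - b x,
      forall d, \sum_(t | fconnect p d t) b t = 0,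
      forall d, \sum_(t | fconnect q d t) w t * b t = 0 &
      forall g, cycle (chained q alpha) g -> all off_A g -> \sum_(x <- g) b x = 0].

Lemma cut_harmonicB b1 b2 :
  cut_harmonic b1 -> cut_harmonic b2 -> cut_harmonic (fun x => b1 x - b2 x).
Proof.
case=> N1 P1 Q1 L1 [N2 P2 Q2 L2]; split.
- by move=> x; rewrite N1 N2 opprD.
- by move=> d; rewrite sumrB P1 P2 subrr.
- by move=> d; under eq_bigr do rewrite mulrBr; rewrite sumrB Q1 Q2 subrr.
- by move=> g g_cycle off_g; rewrite sumrB L1 ?L2 ?subrr.
Qed.

Lemma cut_harmonic_exists : exists b, cut_harmonic b /\ \sum_(x <- B) b x = 1.
Proof.
have [a0 [b0 [a0A b0a0 sumB_A]]] := sum_B_off_A A_form_off.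
set k := \sum_(x <- B) A_form x in sumB_A.
have k_neq0 : k != 0.
  rewrite sumB_A /A_form; case/orP: b0a0 => /eqP->; first by rewrite a0A oner_eq0.
  by rewrite (negbTE (mem_alpha_uniq A_uniq a0A)) alphaK a0A oppr_eq0 oner_eq0.
pose G t := w t * (k^-1 * A_form t).
have GN x : G (alpha x) = - G x by rewrite /G w_alpha A_formN !mulrN.
have [h [hq h_poisson]] := poisson_solvable q_inj alphaK w_gt0 w_alpha q_connected GN.
exists (fun t => (h (alpha t) - h t) + k^-1 * A_form t); split; last first.
  by rewrite big_split /= differential_periods // add0r -mulr_sumr -/k mulVf.
split.
- by move=> x; rewrite alphaK A_formN mulrN opprD opprB.
- by move=> d; rewrite big_split /= differential_closed // -mulr_sumr A_form_closed mulr0 addr0.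
- by move=> d; rewrite -[RHS](h_poisson d); apply: eq_bigr => t _; rewrite mulrDr.
- move=> g g_cycle off_g; rewrite big_split /= differential_periods // add0r -mulr_sumr.
  by rewrite big1_seq ?mulr0 // => t /andP[_ tg]; apply/A_form_off/(allP off_g).
Qed.

Lemma cut_harmonic_eq0 b : cut_harmonic b -> \sum_(x <- B) b x = 0 -> forall x, b x = 0.
Proof.
case=> bN b_closed b_coclosed b_periods sumB0.
have [h [hq dh]] := exact_of_zero_periods q_inj alphaK off_A_alpha bN b_periods cut_connected.
pose r x := b x - (h (alpha x) - h x).
have rN x : r (alpha x) = - r x by rewrite /r bN alphaK opprB opprD opprK addrC.
have r_off t : off_A t -> r t = 0 by move=> off_t; rewrite /r (dh t off_t) subrr.
have r_step y z : y \in A -> z \in A -> chained p alpha y z -> r z = r y.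
  move=> yA zA yz; have := sum_vertex_on_A yA zA yz r_off.
  rewrite /r sumrB b_closed differential_closed // subrr => /esym/eqP.
  by rewrite -/(r z) -/(r (alpha y)) rN addr_eq0 opprK => /eqP.
have [a0 [b0 [a0A b0a0 sumB_r]]] := sum_B_off_A r_off.
have r_a0 : r a0 = 0.
  have : \sum_(x <- B) r x = 0 by rewrite /r sumrB sumB0 differential_periods // subrr.
  by rewrite sumB_r; case/orP: b0a0 => /eqP-> //; rewrite rN => /eqP; rewrite oppr_eq0 => /eqP.
have r0 x : r x = 0.
  case off_x: (off_A x); first exact: r_off.
  move/negbFE: off_x => /orP[xA|axA]; first by rewrite (A_const r_step xA a0A).
  by rewrite -[x]alphaK rN (A_const r_step axA a0A) r_a0 oppr0.
have b_dh x : b x = h (alpha x) - h x by apply/eqP; rewrite -subr_eq0 -/(r x) r0.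
have h_harm d : \sum_(y | fconnect q d y) w y * (h (alpha y) - h y) = 0.
  by rewrite -[RHS](b_coclosed d); apply: eq_bigr => t _; rewrite b_dh.
have h_const := harmonic_const q_connected w_gt0 hq h_harm.
by move=> x; rewrite b_dh (h_const (alpha x) x) subrr.
Qed.

End CutAlongLoop.

Lemma sum_orbit (V : nmodType) (T : finType) (f : T -> T) (F : T -> V) d :
  injective f -> \sum_(x <- orbit f d) F x = \sum_(x | fconnect f d x) F x.
Proof.
move=> finj; rewrite big_uniq ?orbit_uniq //; apply: eq_bigl => x.
by rewrite fconnect_orbit.
Qed.

Local Open Scope complex_scope.

Lemma complex_eq (R : rcfType) (z z' : R[i]) :
  complex.Re z = complex.Re z' -> complex.Im z = complex.Im z' -> z = z'.
Proof. by case: z => a b; case: z' => c d /= -> ->. Qed.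

Lemma Re_realM (R : rcfType) (r : R) (z : R[i]) : complex.Re (r%:C * z) = r * complex.Re z.
Proof. by case: z => a b /=; ring. Qed.

Lemma Re_iM (R : rcfType) (r : R) (z : R[i]) :
  complex.Re ('i * r%:C * z) = - (r * complex.Im z).
Proof. by case: z => a b /=; ring. Qed.

Lemma mul_i_real_neq0 (R : rcfType) (r : R) : r != 0 -> 'i * r%:C != 0.
Proof.
move=> r_neq0; apply/eqP => /(congr1 (@complex.Im R)) /= /eqP.
by rewrite mul0r mul1r add0r (negbTE r_neq0).
Qed.

Section HolomorphicForms.
Variables (R : rcfType) (T : finType) (sigma alpha : T -> T) (rhoP rhoD : T -> R).
Hypotheses (cm : cell_map sigma alpha) (cs : conformal_structure alpha rhoP rhoD).

Lemma sigma_inj : injective sigma. Proof. by case: cm. Qed.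
Lemma alpha_invol : involutive alpha. Proof. by case: cm => _ alphaK _ _ x; apply: alphaK. Qed.

Local Notation vstep := (vstep sigma alpha).

Lemma vstep_inj k : injective (vstep k).
Proof.
case: k => /=; last exact: sigma_inj.
by move=> x y; rewrite /phi => /sigma_inj /(inv_inj alpha_invol).
Qed.

Lemma vstep_negb k x : vstep (~~ k) x = vstep k (alpha x).
Proof. by case: k => //=; rewrite /phi alpha_invol. Qed.

Lemma vstep_connected k x y : connect (graph_step (vstep k) alpha predT) x y.
Proof.
case: cm => _ _ _ /(_ x y); apply: connect_sub => u v /orP[]/eqP->; last first.
  by apply: connect1; rewrite /graph_step eqxx !orbT.
case: k => /=; last by apply: connect1; rewrite /graph_step eqxx.
apply: (connect_trans (y := alpha u)); first by apply: connect1; rewrite /graph_step eqxx !orbT.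
by apply: connect1; rewrite /graph_step /phi alpha_invol eqxx.
Qed.

Lemma is_formP (Phi : lform R T) :
  is_form alpha Phi <-> forall k d, fval Phi k (alpha d) = - fval Phi k d.
Proof.
split=> [Phi_form [] d /=|Phi_N d]; [by case: (Phi_form d)..|].
by split; [apply: (Phi_N false) | apply: (Phi_N true)].
Qed.

Lemma closed_formP (Phi : lform R T) : closed_form sigma alpha Phi <->
  forall k d, \sum_(x | fconnect (vstep (~~ k)) d x) fval Phi k x = 0.
Proof.
rewrite /closed_form; split=> [Phi_closed k d|Phi_closed d].
  have [phi_sum sigma_sum] := Phi_closed d.
  by case: k; rewrite -sum_orbit //; [exact: sigma_inj | exact: vstep_inj].
rewrite !sum_orbit; [split | exact: sigma_inj | exact: (@vstep_inj true)].
  exact (Phi_closed false d).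
exact (Phi_closed true d).
Qed.

Definition rho (k : bool) (d : T) : R := if k then rhoP d else rhoD d.
Definition sgn (k : bool) : R := if k then 1 else -1.

Lemma rho_gt0 k d : 0 < rho k d. Proof. by case: k; case: (cs d). Qed.
Lemma rho_alpha k d : rho k (alpha d) = rho k d. Proof. by case: k; case: (cs d). Qed.

Lemma rhoD_neq0 d : rhoD d != 0. Proof. exact: lt0r_neq0 (rho_gt0 false d). Qed.

Lemma rhoP_inv d : rhoP d = (rhoD d)^-1.
Proof. by case: (cs d) => _ _ _ _ rhoPD; rewrite -[rhoP d]mulr1 -(mulfV (rhoD_neq0 d)) mulrA rhoPD mul1r. Qed.

Lemma sgn_neq0 k : sgn k != 0. Proof. by case: k; rewrite /sgn ?oppr_eq0 oner_eq0. Qed.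

Lemma holomorphic_fval (Phi : lform R T) k : holomorphic sigma alpha rhoP rhoD Phi ->
  forall d, fval Phi k d = 'i * (sgn k * rho k d)%:C * fval Phi (~~ k) d.
Proof.
move=> [_ hodge] d; have := congr1 (fun w : lform R T => w.1 d) hodge.
rewrite /= !ffunE => hodge_eq.
have Phi1E : Phi.1 d = 'i * (- rhoD d)%:C * Phi.2 d.
  by rewrite rmorphN -mulrA hodge_eq mulrA mulrN -expr2 sqr_i opprK mul1r.
case: k => /=; last by rewrite mulN1r.
rewrite Phi1E; case: (Phi.2 d) => a b; apply: complex_eq; rewrite /= rhoP_inv.
  by field; apply: rhoD_neq0.
by field; apply: rhoD_neq0.
Qed.

Definition lform_of (k : bool) (U V : T -> R[i]) : lform R T :=
  if k then ([ffun d => V d], [ffun d => U d]) else ([ffun d => U d], [ffun d => V d]).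

Lemma fval_lform_of k U V k' d : fval (lform_of k U V) k' d = if k' == k then U d else V d.
Proof. by case: k; case: k'; rewrite /= ffunE. Qed.

Lemma lform_ext (Phi1 Phi2 : lform R T) :
  (forall k d, fval Phi1 k d = fval Phi2 k d) -> Phi1 = Phi2.
Proof.
case: Phi1 => a1 b1; case: Phi2 => a2 b2 Phi12; congr pair; apply/ffunP => d.
  exact: (Phi12 false d).
exact: (Phi12 true d).
Qed.

Lemma hodge_lform_of k (V : T -> R[i]) : (forall x, V (alpha x) = - V x) ->
  let Phi := lform_of k (fun d => 'i * (sgn k * rho k d)%:C * V d) V in
  hodge alpha rhoP rhoD Phi = ([ffun d => - 'i * Phi.1 d], [ffun d => - 'i * Phi.2 d]).
Proof.
move=> VN; case: k; congr pair; apply/ffunP => d; rewrite /= !ffunE ?VN;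
  case: (cs d) => _ _ rhoP_alpha rhoD_alpha _; rewrite ?rhoP_alpha ?rhoD_alpha;
  case: (V d) => a b; apply: complex_eq; rewrite /= ?rhoP_inv; first [ring | field; exact: rhoD_neq0].
Qed.

Variables (kA : bool) (A B : seq T).
Hypotheses (A_simple : simple_loop sigma alpha kA A) (B_simple : simple_loop sigma alpha (~~ kA) B)
  (AB_once : n_dual_edges alpha kA A (~~ kA) B = 1%N).

Local Notation p := (vstep kA).
Local Notation q := (vstep (~~ kA)).
Local Notation w := (rho kA).

Let A_cycle : cycle (chained p alpha) A. Proof. by case/and4P: A_simple. Qed.
Let A_uniq : uniq (A ++ map alpha A). Proof. by case/and4P: A_simple. Qed.
Let A_pairwise : pairwise (fun x y => ~~ fconnect p x y) A. Proof. by case/and4P: A_simple. Qed.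
Let B_cycle : cycle (chained q alpha) B. Proof. by case/and4P: B_simple. Qed.
Let B_uniq : uniq (B ++ map alpha B). Proof. by case/and4P: B_simple. Qed.

Let AB_count : count (fun a => has (fun b => (b == a) || (b == alpha a)) B) A = 1%N.
Proof.
rewrite -AB_once; apply: eq_count => a; apply: eq_has => b.
by rewrite /edge_dual; case: kA.
Qed.

Lemma no_dual_edge_off_A g :
  ~~ has (fun x => has (edge_dual alpha (~~ kA) x kA) A) g = all (off_A alpha A) g.
Proof.
rewrite -all_predC; apply: eq_all => x /=; rewrite /off_A /on_A; congr negb.
rewrite (eq_has (a2 := predU (pred1 x) (pred1 (alpha x)))) ?has_predU ?has_pred1 //.
by move=> b; rewrite /edge_dual; case: kA.
Qed.

Lemma no_dual_edge_same_kind x : has (edge_dual alpha kA x kA) A = false.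
Proof. by apply/hasPn => a _; rewrite /edge_dual eqxx. Qed.

Definition period_solution (Phi : lform R T) : Prop :=
  [/\ is_form alpha Phi, holomorphic sigma alpha rhoP rhoD Phi,
      complex.Re (integral Phi (~~ kA) B) = 1 &
      forall (kg : bool) (g : seq T), is_loop sigma alpha kg g ->
        ~~ has (fun x => has (edge_dual alpha kg x kA) A) g ->
        complex.Re (integral Phi kg g) = 0].

Lemma period_solution_of_cut_harmonic b :
  cut_harmonic p q alpha A w b -> \sum_(x <- B) b x = 1 ->
  period_solution (lform_of kA (fun d => 'i * (sgn kA * w d)%:C * (b d)%:C) (fun d => (b d)%:C)).
Proof.
case=> bN b_closed b_coclosed b_periods b_B.
set Phi := lform_of _ _ _; have fvalE k d := fval_lform_of kA
  (fun d => 'i * (sgn kA * w d)%:C * (b d)%:C) (fun d => (b d)%:C) k d.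
have kA_neq : (~~ kA == kA) = false by case: kA.
split.
- apply/is_formP => k d; rewrite !fvalE; case: (k == kA); rewrite bN rmorphN ?mulrN //.
  by rewrite rho_alpha.
- split; last by apply: hodge_lform_of => x; rewrite bN rmorphN.
  apply/closed_formP => k d; under eq_bigr do rewrite fvalE.
  have [->|/negbTE k_neq] := eqVneq k kA.
    rewrite (eq_bigr (fun i => 'i * (sgn kA)%:C * (w i * b i)%:C)) => [|i _].
      by rewrite -mulr_sumr -rmorph_sum b_coclosed rmorph0 mulr0.
    by rewrite !rmorphM !mulrA.
  have -> : k = ~~ kA by case: k kA k_neq => [] [].
  by rewrite negbK -rmorph_sum b_closed.
- by rewrite /integral raddf_sum; under eq_bigr do rewrite fvalE kA_neq.
move=> kg g g_loop no_dual; rewrite /integral raddf_sum.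
have [->|/negbTE kg_neq] := eqVneq kg kA.
  by apply: big1 => x _; rewrite /= fvalE eqxx Re_iM /= mulr0 oppr0.
have kg_def : kg = ~~ kA by case: kg kA kg_neq {g_loop no_dual} => [] [].
rewrite kg_def in g_loop no_dual *; under eq_bigr do rewrite fvalE kA_neq.
by apply: b_periods; rewrite -?no_dual_edge_off_A.
Qed.

Lemma period_solution_parts Phi : period_solution Phi ->
  let V := fval Phi (~~ kA) in
  [/\ forall d, fval Phi kA d = 'i * (sgn kA * w d)%:C * V d,
      cut_harmonic p q alpha A w (fun x => complex.Re (V x)),
      \sum_(x <- B) complex.Re (V x) = 1,
      (forall x, V (alpha x) = - V x) /\ (forall d, \sum_(x | fconnect p d x) V x = 0) &
      forall g, cycle (chained p alpha) g -> \sum_(x <- g) w x * complex.Im (V x) = 0].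
Proof.
case=> /is_formP Phi_N Phi_holo Phi_B Phi_periods V.
have /closed_formP Phi_closed := Phi_holo.1.
have UV := holomorphic_fval kA Phi_holo.
have VN x : V (alpha x) = - V x by apply: Phi_N.
have V_closed d : \sum_(x | fconnect p d x) V x = 0.
  by have := Phi_closed (~~ kA) d; rewrite negbK.
have wV_coclosed d : \sum_(x | fconnect q d x) (w x)%:C * V x = 0.
  have := Phi_closed kA d; under eq_bigr do rewrite UV rmorphM mulrA -mulrA.
  rewrite -mulr_sumr => /eqP; rewrite mulf_eq0 (negbTE (mul_i_real_neq0 (sgn_neq0 kA))) /=.
  by move/eqP.
split=> //.
- split=> [x|d|d|g g_cycle off_g].
  + by rewrite VN raddfN.
  + by rewrite -raddf_sum V_closed.
  + by under eq_bigr do rewrite -Re_realM; rewrite -raddf_sum wV_coclosed.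
  have := Phi_periods (~~ kA) g g_cycle; rewrite no_dual_edge_off_A => /(_ off_g).
  by rewrite /integral raddf_sum.
- by move: Phi_B; rewrite /integral raddf_sum.
move=> g g_cycle; have := Phi_periods kA g g_cycle.
rewrite (@eq_has _ _ pred0) ?has_pred0 => [/(_ isT)|x]; last exact: no_dual_edge_same_kind.
rewrite /integral raddf_sum; under eq_bigr do rewrite /= UV Re_iM -mulrA.
by rewrite sumrN -mulr_sumr => /eqP; rewrite oppr_eq0 mulf_eq0 (negbTE (sgn_neq0 kA)) => /eqP.
Qed.

Lemma period_solution_unique Phi1 Phi2 :
  period_solution Phi1 -> period_solution Phi2 -> Phi1 = Phi2.
Proof.
move=> /period_solution_parts [U1 H1 B1 [N1 C1] P1] /period_solution_parts [U2 H2 B2 [N2 C2] P2].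
set V1 := fval Phi1 (~~ kA) in U1 H1 B1 N1 C1 P1.
set V2 := fval Phi2 (~~ kA) in U2 H2 B2 N2 C2 P2.
have Re_eq x : complex.Re (V1 x) = complex.Re (V2 x).
  apply/eqP; rewrite -subr_eq0; apply/eqP; move: x.
  apply: (cut_harmonic_eq0 (@vstep_inj kA) alpha_invol (@vstep_negb kA) A_cycle A_uniq A_pairwise
    B_cycle B_uniq AB_count (@vstep_connected kA) (rho_gt0 kA) (cut_harmonicB H1 H2)).
  by rewrite sumrB B1 B2 subrr.
have Im_eq x : complex.Im (V1 x) = complex.Im (V2 x).
  apply/eqP; rewrite -subr_eq0; apply/eqP; move: x.
  apply: (coclosed_exact_form_eq0 (@vstep_inj kA) alpha_invol (@vstep_connected kA)
    (rho_gt0 kA) (rho_alpha kA)).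
  - by move=> x; rewrite N1 N2 !raddfN opprD.
  - by move=> d; rewrite sumrB -!raddf_sum C1 C2 subrr.
  - by move=> g g_cycle; under eq_bigr do rewrite mulrBr; rewrite sumrB P1 // P2 // subrr.
have V12 x : V1 x = V2 x by apply: complex_eq.
apply: lform_ext => k d; have [->|/negbTE k_neq] := eqVneq k kA; first by rewrite U1 U2 V12.
by have -> : k = ~~ kA by case: k kA k_neq => [] [].
Qed.

Lemma period_solution_exists : exists Phi, period_solution Phi.
Proof.
have [b [b_harm b_B]] := cut_harmonic_exists (@vstep_inj kA) alpha_invol (@vstep_negb kA)
  A_cycle A_uniq A_pairwise B_cycle B_uniq AB_count (@vstep_connected kA) (rho_gt0 kA) (rho_alpha kA).
by eexists; apply: period_solution_of_cut_harmonic b_harm b_B.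
Qed.

End HolomorphicForms.

Lemma dual_edges_kind (T : finType) (alpha : T -> T) kA A kB B :
  n_dual_edges alpha kA A kB B = 1%N -> kB = ~~ kA.
Proof.
have [->|] := eqVneq kB kA; last by case: kA kB => [] [].
rewrite /n_dual_edges (eq_count (a2 := pred0)) ?count_pred0 // => a.
by apply/hasPn => b _; rewrite /edge_dual eqxx.
Qed.

Theorem mainTheorem10 (R : rcfType) (T : finType) (sigma alpha : T -> T)
    (rhoP rhoD : T -> R) (kA : bool) (A : seq T) (kB : bool) (B : seq T) :
  cell_map sigma alpha ->
  conformal_structure alpha rhoP rhoD ->
  simple_loop sigma alpha kA A ->
  simple_loop sigma alpha kB B ->
  non_intersecting sigma alpha kA A kB B ->
  n_dual_edges alpha kA A kB B = 1%N ->
  exists! Phi : lform R T,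
    [/\ is_form alpha Phi,
        holomorphic sigma alpha rhoP rhoD Phi,
        complex.Re (integral Phi kB B) = 1 &
        forall (kg : bool) (g : seq T),
          is_loop sigma alpha kg g ->
          ~~ has (fun x => has (edge_dual alpha kg x kA) A) g ->
          complex.Re (integral Phi kg g) = 0].
Proof.
move=> cm cs A_simple B_simple _ AB_once.
have kB_def := dual_edges_kind AB_once; subst kB.
have [Phi Phi_sol] := period_solution_exists cm cs A_simple B_simple AB_once.
exists Phi; split=> [|Phi']; first exact: Phi_sol.
by move=> Phi_sol'; apply: (period_solution_unique cm cs A_simple B_simple AB_once Phi_sol Phi_sol').
Qed.
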